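(* For $i=1,2$ let $R_i$ be a unital ring whose additive group is torsion-free of rank $n$, and let $M_i\subseteq R_i^\times$ be a submonoid. Let $\mathcal L$ be a subgroup of $R_1$ of rank $n$, and assume that ${\rm span}_{\mathbb Z}(M_1)$ has finite index in $R_1$. If there are an injective additive group homomorphism $\mathfrak b\colon\mathbb Q\mathcal L\to\mathbb QR_2$ and a group homomorphism $\mathfrak t\colon\langle M_1\rangle\to\langle M_2\rangle$ such that $\mathfrak b(ax)=\mathfrak t(a)\mathfrak b(x)$ for all $a\in M_1$ and $x\in\mathbb Q\mathcal L$, then there is a unital $\mathbb Q$-algebra isomorphism $\varphi\colon\mathbb QR_1\to\mathbb QR_2$ with $\varphi|_{\langle M_1\rangle}=\mathfrak t$.
   Context: The rank of $R$ is $\dim_{\mathbb Q}\mathbb Q\otimes_{\mathbb Z}R$; $\mathbb QR=\mathbb Q\otimes_{\mathbb Z}R$ (an $n$-dimensional $\mathbb Q$-algebra containing $R$), and for a subgroup $\mathcal L\subseteq R$, $\mathbb Q\mathcal L=\mathbb Q\otimes\mathcal L\subseteq\mathbb QR$. $R^\times$ is the monoid of left regular elements of $R$ (those $a$ with $x\mapsto ax$ injective on $R$); these are invertible in $\mathbb QR$, and $\langle M\rangle$ denotes the subgroup of the unit group $(\mathbb QR)^*$ generated by $M$. *)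

From HB Require Import structures.
From mathcomp Require Import all_boot all_order all_algebra all_field.
Set Implicit Arguments. Unset Strict Implicit. Unset Printing Implicit Defensive.
Import GRing.Theory.
Local Open Scope ring_scope.

(* Convention: a unital ring R whose additive group is torsion-free of rank n
   is modelled as a unital subring R of the n-dimensional Q-algebra A = Q (x) R.
   Subsets of A are Prop-valued predicates. *)

Section Defs.
Variable A : falgType rat.

Definition is_subring (R : A -> Prop) : Prop :=
  [/\ R 1, forall x y, R x -> R y -> R (x - y) & forall x y, R x -> R y -> R (x * y)].

Definition is_addsubgroup (S : A -> Prop) : Prop :=
  S 0 /\ forall x y, S x -> S y -> S (x - y).

(* rank of a subgroup S: the maximal number of Q-linearly (= Z-linearly)
   independent elements of S *)
Definition has_rank (S : A -> Prop) (n : nat) : Prop :=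
  (exists s : seq A, [/\ size s = n, forall x, x \in s -> S x & free s]) /\
  (forall s : seq A, (forall x, x \in s -> S x) -> free s -> (size s <= n)%N).

(* Q L = Q (x) L, viewed inside A *)
Definition Qspan (S : A -> Prop) : A -> Prop :=
  fun x => exists m : nat, (0 < m)%N /\ S (x *+ m).

Definition left_regular (R : A -> Prop) (a : A) : Prop :=
  R a /\ forall x y, R x -> R y -> a * x = a * y -> x = y.

Definition is_submonoid_leftreg (R M : A -> Prop) : Prop :=
  [/\ forall a, M a -> left_regular R a, M 1 & forall a b, M a -> M b -> M (a * b)].

Inductive Zspan (M : A -> Prop) : A -> Prop :=
| Zspan_in x : M x -> Zspan M x
| Zspan_0 : Zspan M 0
| Zspan_sub x y : Zspan M x -> Zspan M y -> Zspan M (x - y).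

Definition finite_index (S R : A -> Prop) : Prop :=
  (forall x, S x -> R x) /\
  exists c : seq A, (forall r, r \in c -> R r) /\
    forall x, R x -> exists2 r, r \in c & S (x - r).

Inductive gen_group (M : A -> Prop) : A -> Prop :=
| gg_in x : M x -> gen_group M x
| gg_one : gen_group M 1
| gg_inv x : gen_group M x -> gen_group M x^-1
| gg_mul x y : gen_group M x -> gen_group M y -> gen_group M (x * y).

End Defs.

From HB Require Import structures.
From mathcomp Require Import all_boot all_order all_algebra all_field.
Set Implicit Arguments.
Unset Strict Implicit.
Unset Printing Implicit Defensive.
Import GRing.Theory Num.Theory.
Local Open Scope ring_scope.

(* Since L has full rank, QL is all of QR1, so b is a Q-linear bijection and
   x0 := b^-1(1) exists.  Put phi y := b (y x0).  The set of y with
   b (y x) = phi y * b x for every x is a Q-subspace containing M1, hence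
   containing span_Z(M1); the finite index hypothesis makes its Q-span all of
   QR1.  So b (y x) = phi y * b x everywhere, which makes phi multiplicative;
   phi is injective because phi y * b 1 = b y, and it agrees with t on M1
   because b x0 = 1.  Two homomorphisms agreeing on M1 agree on <M1>. *)

Section AdditiveSubgroups.
Variable A : falgType rat.
Implicit Types (S R M : A -> Prop) (x y : A).

Lemma addsubgroupD S x y : is_addsubgroup S -> S x -> S y -> S (x + y).
Proof.
move=> [S0 SB] Sx Sy; have := SB x (0 - y) Sx (SB _ _ S0 Sy).
by rewrite sub0r opprK.
Qed.

Lemma addsubgroupMn S x k : is_addsubgroup S -> S x -> S (x *+ k).
Proof.
move=> hS Sx; elim: k => [|k IHk]; first by rewrite mulr0n; case: hS.
by rewrite mulrS; apply: addsubgroupD.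
Qed.

Lemma addsubgroupMz S x z : is_addsubgroup S -> S x -> S (x *~ z).
Proof.
move=> hS Sx; case: z => k; first exact: addsubgroupMn.
rewrite NegzE mulrNz -sub0r; have [S0 SB] := hS.
by apply: SB => //; apply: addsubgroupMn.
Qed.

Lemma subring_addsubgroup R : is_subring R -> is_addsubgroup R.
Proof. by case=> R1 RB _; split=> //; have := RB 1 1 R1 R1; rewrite subrr. Qed.

Lemma Zspan_addsubgroup M : is_addsubgroup (Zspan M).
Proof. by split; [apply: Zspan_0 | apply: Zspan_sub]. Qed.

Lemma Qspan_add S x y :
  is_addsubgroup S -> Qspan S x -> Qspan S y -> Qspan S (x + y).
Proof.
move=> hS [m [m_gt0 Sxm]] [k [k_gt0 Syk]]; exists (m * k)%N.
split; first by rewrite muln_gt0 m_gt0 k_gt0.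
rewrite mulrnDl mulrnA [(m * k)%N]mulnC mulrnA.
by apply: (addsubgroupD hS); apply: addsubgroupMn.
Qed.

Lemma Qspan_scale S q x : is_addsubgroup S -> Qspan S x -> Qspan S (q *: x).
Proof.
move=> hS [m [m_gt0 Sxm]]; exists (m * `|denq q|)%N.
split; first by rewrite muln_gt0 m_gt0 absz_gt0 denq_neq0.
have -> : (q *: x) *+ (m * `|denq q|) = (x *+ m) *~ numq q.
  rewrite -!scaler_nat -scaler_int !scalerA; congr (_ *: _).
  rewrite numqE natrM natr_absz gtr0_norm ?denq_gt0 //.
  by rewrite [RHS]mulrC [q * _]mulrC mulrA.
exact: addsubgroupMz.
Qed.

Lemma Qspan_full S : is_addsubgroup S -> has_rank S (\dim {:A}) -> forall x, Qspan S x.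
Proof.
move=> hS [[s [size_s Ss free_s]] _] x.
have span_s : <<s>>%VS = fullv.
  by apply/eqP; rewrite eqEdim subvf /= (eqnP free_s) size_s leqnn.
have : x \in <<in_tuple s>>%VS by rewrite /= span_s memvf.
move/coord_span => ->; apply: (big_ind (Qspan S)).
- by exists 1%N; rewrite mulr1n; case: hS.
- by move=> ? ? ? ?; apply: Qspan_add.
- move=> i _; apply: Qspan_scale => //; exists 1%N.
  by rewrite mulr1n; split=> //; apply/Ss/mem_nth.
Qed.

(* Pigeonhole: two of the multiples 0, r, ..., r *+ size c lie in the same coset. *)
Lemma finite_index_mulrn S R r :
  is_addsubgroup S -> is_addsubgroup R -> finite_index S R -> R r ->
  exists2 k, (0 < k)%N & S (r *+ k).
Proof.
move=> [S0 SB] hR [_ [c [_ cover]]] Rr.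
have coset_of i : exists j : 'I_(size c), S (r *+ i - c`_j).
  have [y yc Sy] := cover _ (addsubgroupMn i hR Rr).
  by exists (Ordinal (etrans (index_mem y c) yc)); rewrite /= nth_index.
have [f Sf] := @fin_all_exists _ (fun _ => 'I_(size c)) _
  (fun i : 'I_(size c).+1 => coset_of i).
have /injectivePn[i [j ij fij]] : ~~ injectiveb f.
  by apply/negP => /injectiveP/leq_card; rewrite !card_ord ltnn.
have Sij : S (r *+ i - r *+ j).
  by have := SB _ _ (Sf i) (Sf j); rewrite fij opprB addrA subrK.
case: (ltngtP i j) => [ltij | ltji | /val_inj eqij]; last by case/eqP: ij.
- exists (j - i)%N; first by rewrite subn_gt0.
  by rewrite (mulrnBr _ (ltnW ltij)) -opprB -sub0r; apply: SB.
- by exists (i - j)%N; rewrite ?subn_gt0 // (mulrnBr _ (ltnW ltji)).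
Qed.

Lemma Qspan_finite_index S R x :
  is_addsubgroup S -> is_addsubgroup R -> finite_index S R -> Qspan R x -> Qspan S x.
Proof.
move=> hS hR fi [m [m_gt0 Rxm]]; have [k k_gt0 Sxmk] := finite_index_mulrn hS hR fi Rxm.
by exists (m * k)%N; rewrite muln_gt0 m_gt0 k_gt0 mulrnA.
Qed.

Lemma Qspan_Zspan_sub M (P : A -> Prop) :
  (forall a, M a -> P a) -> P 0 -> (forall x y, P x -> P y -> P (x - y)) ->
  (forall q x, P x -> P (q *: x)) ->
  forall x, Qspan (Zspan M) x -> P x.
Proof.
move=> MP P0 PB PZ x [m [m_gt0 Zxm]].
have Pxm : P (x *+ m) by elim: Zxm => [a /MP | | u v _ Pu _ Pv]; last exact: PB.
have := PZ m%:R^-1 _ Pxm.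
by rewrite -scaler_nat scalerA mulVf ?scale1r // pnatr_eq0 -lt0n.
Qed.

End AdditiveSubgroups.

Lemma additive_rat_linear (U V : lmodType rat) (f : U -> V) :
  {morph f : x y / x + y} -> linear f.
Proof.
move=> fD q x y; have f0 : f 0 = 0 by apply: (addrI (f 0)); rewrite -fD !addr0.
have fB : zmod_morphism f.
  by move=> u v; apply: (addIr (f v)); rewrite -fD !subrK.
by rewrite fD (rat_linear fB).
Qed.

Lemma linear_inj_bijective (K : fieldType) (U V : vectType K) (f : U -> V) :
  linear f -> injective f -> \dim {:U} = \dim {:V} -> bijective f.
Proof.
move=> f_lin f_inj dimUV.
pose fL : {linear U -> V} := HB.pack f (GRing.isLinear.Build _ _ _ _ f f_lin).
pose h := linfun fL; have hE : h =1 f by move=> u; rewrite /h lfunE.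
have ker_h : lker h == 0%VS by apply/lker0P => u v; rewrite !hE => /f_inj.
have img_h : limg h = fullv.
  apply/eqP; rewrite eqEdim subvf /= limg_dim_eq ?dimUV //.
  by rewrite (eqP ker_h) capv0.
exists (h^-1)%VF => [u | v]; first by rewrite -hE lker0_lfunK.
by rewrite -hE limg_lfunVK // img_h memvf.
Qed.

Section Transport.
Variables (A1 A2 : falgType rat) (b : {linear A1 -> A2}) (x0 : A1).

Definition transport y := b (y * x0).

Definition intertwines y := forall x, b (y * x) = transport y * b x.

Lemma intertwines0 : intertwines 0.
Proof. by move=> x; rewrite /transport !mul0r linear0 mul0r. Qed.

Lemma intertwinesB y z : intertwines y -> intertwines z -> intertwines (y - z).
Proof. by move=> Iy Iz x; rewrite /transport !mulrBl !linearB Iy Iz mulrBl. Qed.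

Lemma intertwinesZ q y : intertwines y -> intertwines (q *: y).
Proof. by move=> Iy x; rewrite /transport -!scalerAl !linearZZ Iy scalerAl. Qed.

Lemma transport_linear : linear transport.
Proof. by move=> q x y; rewrite /transport mulrDl -scalerAl linearP. Qed.

Lemma transport1 : b x0 = 1 -> transport 1 = 1.
Proof. by rewrite /transport mul1r. Qed.

Hypothesis intertwines_all : forall y, intertwines y.

Lemma transport_mul : {morph transport : x y / x * y}.
Proof. by move=> x y; rewrite {1}/transport -mulrA intertwines_all. Qed.

(* b y = transport y * b 1, so the kernel of transport is that of b. *)
Lemma transport_inj : injective b -> injective transport.
Proof.
move=> b_inj y z eq_yz; apply: b_inj.
by rewrite -[y]mulr1 -[z]mulr1 !intertwines_all eq_yz.
Qed.

End Transport.

Lemma eq_on_gen_group (A : falgType rat) (B : unitRingType) (M : A -> Prop)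
    (f g : A -> B) :
  M 1 -> f 1 = 1 -> {morph f : x y / x * y} ->
  (forall x y, gen_group M x -> gen_group M y -> g (x * y) = g x * g y) ->
  (forall a, M a -> f a = g a) -> forall a, gen_group M a -> f a = g a.
Proof.
move=> M1 f1 fM gM eq_fg a; elim=> [{}a /eq_fg // | | x Gx IHx | x y Gx IHx Gy IHy].
- by rewrite -eq_fg.
- have [ux | /invr_out -> //] := boolP (x \is a GRing.unit).
  have fVx : f x^-1 * f x = 1 by rewrite -fM mulVr.
  have ufx : f x \is a GRing.unit.
    by apply/unitrP; exists (f x^-1); rewrite -!fM mulVr ?mulrV.
  have gVx : g x^-1 * f x = 1 by rewrite IHx -gM ?mulVr -?eq_fg //; apply: gg_inv.
  by rewrite -[LHS](mulrK ufx) -[RHS](mulrK ufx) fVx gVx.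
- by rewrite fM gM // IHx IHy.
Qed.

Theorem proposition5p1 (n : nat) (A1 A2 : falgType rat)
  (R1 : A1 -> Prop) (R2 : A2 -> Prop) (M1 : A1 -> Prop) (M2 : A2 -> Prop)
  (L : A1 -> Prop) (b : A1 -> A2) (t : A1 -> A2) :
  \dim {: A1} = n -> \dim {: A2} = n ->
  is_subring R1 -> has_rank R1 n ->
  is_subring R2 -> has_rank R2 n ->
  is_submonoid_leftreg R1 M1 -> is_submonoid_leftreg R2 M2 ->
  is_addsubgroup L -> (forall x, L x -> R1 x) -> has_rank L n ->
  finite_index (Zspan M1) R1 ->
  (forall x y, Qspan L x -> Qspan L y -> b (x + y) = b x + b y) ->
  (forall x y, Qspan L x -> Qspan L y -> b x = b y -> x = y) ->
  (forall a, gen_group M1 a -> gen_group M2 (t a)) ->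
  (forall a c, gen_group M1 a -> gen_group M1 c -> t (a * c) = t a * t c) ->
  (forall a x, M1 a -> Qspan L x -> b (a * x) = t a * b x) ->
  exists phi : A1 -> A2,
    [/\ forall (q : rat) (x y : A1), phi (q *: x + y) = q *: phi x + phi y,
        forall x y : A1, phi (x * y) = phi x * phi y,
        phi 1 = 1,
        bijective phi
      & forall a, gen_group M1 a -> phi a = t a].
Proof.
move=> dimA1 dimA2 R1_subring R1_rank _ _ M1_monoid _ L_subgroup _ L_rank.
move=> M1_index bD b_inj _ tM bM.
have QL : forall x, Qspan L x by apply: Qspan_full; rewrite ?dimA1.
have b_lin : linear b by apply: additive_rat_linear => x y; apply: bD.
pose bL : {linear A1 -> A2} := HB.pack b (GRing.isLinear.Build _ _ _ _ b b_lin).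
have {}b_inj : injective b by move=> x y; apply: b_inj.
have dimA12 : \dim {:A1} = \dim {:A2} by rewrite dimA1 dimA2.
have [b_inv _ b_invK] := linear_inj_bijective b_lin b_inj dimA12.
pose x0 := b_inv 1; have b_x0 : b x0 = 1 := b_invK 1.
have phi_t a : M1 a -> transport bL x0 a = t a.
  by move=> M1a; rewrite /transport /= (bM _ _ M1a (QL _)) b_x0 mulr1.
have intertwines_all y : intertwines bL x0 y.
  apply: (Qspan_Zspan_sub (M := M1)) => [a M1a x | | | |].
  - by rewrite /= (bM _ x M1a (QL x)) -(phi_t _ M1a).
  - exact: intertwines0.
  - exact: intertwinesB.
  - exact: intertwinesZ.
  - have R1_subgroup := subring_addsubgroup R1_subring.
    apply: (Qspan_finite_index (Zspan_addsubgroup M1) R1_subgroup M1_index).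
    by apply: (Qspan_full R1_subgroup); rewrite dimA1.
have phi_lin := transport_linear bL x0.
have phi_mul := transport_mul intertwines_all.
have phi1 : transport bL x0 1 = 1 := @transport1 _ _ bL _ b_x0.
exists (transport bL x0); split=> //.
  exact: linear_inj_bijective phi_lin (transport_inj intertwines_all b_inj) dimA12.
by case: M1_monoid => _ M1_1 _; apply: eq_on_gen_group phi_t.
Qed.
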